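(* Let $\Gamma$ be a finitely presented group, $\Gamma = \langle S \mid R\rangle$ with $S$ a finite symmetric generating set and $R$ a finite set of relators (words in $S$), and assume that $\Gamma$ is one-ended. Let $r$ be a real number with $r > \max_{w \in R} \tfrac{|w|}{2}$, where $|w|$ denotes the word length of $w$. Then the Cayley graph of $\Gamma$ with respect to $S$ has connected spheres with constant $r$: for every integer $n \geq 0$, the set $B_{n+r} \cap B_n^{\mathrm{c},\infty}$ is connected.
   Context: For a finitely generated group $\Gamma$ and a finite set $S \subset \Gamma$ with $s \in S \Rightarrow s^{-1} \in S$ generating $\Gamma$, the Cayley graph has vertex set $\Gamma$, with $g,h$ joined by an edge whenever $gs = h$ for some $s \in S$; it carries the graph (word) metric. $B_t$ denotes the ball of radius $t$ centred at the identity element $e$ in this metric. $\Gamma$ is one-ended if, for all large $n$, the complement of $B_n$ in the Cayley graph has exactly one infinite connected component; $B_n^{\mathrm{c},\infty}$ denotes this infinite connected component of the complement $B_n^{\mathrm{c}}$ of $B_n$. A set of vertices is called connected if the subgraph of the Cayley graph induced on it is connected. The Cayley graph has connected spheres with constant $r>0$ if for all $n \geq 0$ the set $B_{n+r} \cap B_n^{\mathrm{c},\infty}$ is connected. *)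

From Stdlib Require Import Reals List Relations.
Import ListNotations.
Open Scope R_scope.

Record group := Group {
  carrier :> Type;
  gmul : carrier -> carrier -> carrier;
  ginv : carrier -> carrier;
  gone : carrier;
  gmulA : forall x y z, gmul x (gmul y z) = gmul (gmul x y) z;
  gmul1 : forall x, gmul gone x = x;
  gmulV : forall x, gmul (ginv x) x = gone
}.

Section Cayley.
Variable G : group.
Variable S : list G.

Definition word_in (w : list G) : Prop := Forall (fun s => In s S) w.
Definition eval (w : list G) : G := fold_right (gmul G) (gone G) w.

Definition symmetric_set : Prop := forall s, In s S -> In (ginv G s) S.

Inductive pres_step (R : list (list G)) : list G -> list G -> Prop :=
| step_free : forall u v s, In s S ->
    pres_step R (u ++ [s; ginv G s] ++ v) (u ++ v)
| step_rel : forall u v r, In r R ->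
    pres_step R (u ++ r ++ v) (u ++ v).

(* G = < S | R > : S is a finite symmetric generating set, R a finite set of
   relators (words in S) holding in G, and every word in S representing the
   identity is a consequence of R (i.e. reduces to the empty word by
   insertion/deletion of relators and of trivial relators s s^-1). *)
Definition presentation (R : list (list G)) : Prop :=
  symmetric_set /\
  (forall g : G, exists w, word_in w /\ eval w = g) /\
  (forall r, In r R -> word_in r /\ eval r = gone G) /\
  (forall w, word_in w -> eval w = gone G ->
     clos_refl_sym_trans _ (pres_step R) w []).

Definition adj (g h : G) : Prop := exists s, In s S /\ gmul G g s = h.

Definition in_ball (t : R) (g : G) : Prop :=
  exists w, word_in w /\ eval w = g /\ INR (length w) <= t.

Definition connected_in (A : G -> Prop) (x y : G) : Prop :=
  A x /\ A y /\
  clos_refl_trans _ (fun a b => A a /\ A b /\ (adj a b \/ adj b a)) x y.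

Definition connected_set (A : G -> Prop) : Prop :=
  forall x y, A x -> A y -> connected_in A x y.

Definition infinite_set (A : G -> Prop) : Prop :=
  ~ exists l : list G, forall g, A g -> In g l.

Definition ball_compl (n : nat) (g : G) : Prop := ~ in_ball (INR n) g.

Definition in_inf_comp (n : nat) (g : G) : Prop :=
  ball_compl n g /\ infinite_set (connected_in (ball_compl n) g).

Definition one_ended : Prop :=
  exists N : nat, forall n, (N <= n)%nat ->
    (exists g, in_inf_comp n g) /\
    (forall x y, in_inf_comp n x -> in_inf_comp n y ->
       connected_in (ball_compl n) x y).

Definition connected_spheres (r : R) : Prop :=
  forall n : nat,
    connected_set (fun g => in_ball (INR n + r) g /\ in_inf_comp n g).

End Cayley.

(** Fix [n] and a point [x] of [B_n^(c,∞)]; by one-endedness the infinite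
    components of [B_n^c] form a single component [U], so the set to study is the
    shell [B_(n+r) ∩ U]. Every shell point is joined inside the shell, along a
    word from [e], to a point of [B_(n+1)]. Given a shell point [t] of [B_(n+1)],
    label an edge of the Cayley graph by 1 when it joins the shell component of
    [t] to a point of [U] outside [B_(n+r)]. The sum of the labels around a
    relator loop is 0: since the loop has length [< 2r], if it meets [B_n] it
    stays inside [B_(n+r)], and otherwise it lies in a single component of [B_n^c]
    where the sum telescopes. As the relators generate all closed words, sums of
    labels along words depend only on the endpoints. A second shell point [t'] of
    [B_(n+1)] is reached from [t] both through [e] by words in [B_(n+1)], with sum
    0, and by a path in [U], with sum 1 unless [t'] lies in the shell component
    of [t]. *)
From Stdlib Require Import Reals List Relations Lra Lia Bool Compare_dec.
From Stdlib Require Import Classical ClassicalDescription.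
Import ListNotations.
Open Scope R_scope.

Definition asbool (P : Prop) : bool :=
  if excluded_middle_informative P then true else false.

Lemma asboolT (P : Prop) : P -> asbool P = true.
Proof. unfold asbool; destruct (excluded_middle_informative P); tauto. Qed.

Lemma asboolF (P : Prop) : ~ P -> asbool P = false.
Proof. unfold asbool; destruct (excluded_middle_informative P); tauto. Qed.

Lemma asbool_iff (P Q : Prop) : (P <-> Q) -> asbool P = asbool Q.
Proof.
  intro HPQ; destruct (classic P) as [HP | HP].
  - rewrite (asboolT P HP), (asboolT Q (proj1 HPQ HP)); reflexivity.
  - rewrite (asboolF P HP), (asboolF Q (fun HQ => HP (proj2 HPQ HQ))); reflexivity.
Qed.

Lemma xorb_telescope (a b c : bool) : xorb (xorb a b) (xorb b c) = xorb a c.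
Proof. destruct a, b, c; reflexivity. Qed.

Section Group.
Variable G : group.
Local Infix "⋅" := (gmul G) (at level 40, left associativity).
Local Notation e := (gone G).

Lemma gmul_inv_r (g : G) : g ⋅ ginv G g = e.
Proof.
  rewrite <- (gmul1 G (g ⋅ ginv G g)), <- (gmulV G (ginv G g)) at 1.
  rewrite <- gmulA, (gmulA G (ginv G g) g (ginv G g)), gmulV, gmul1.
  apply gmulV.
Qed.

Lemma gmul_1_r (g : G) : g ⋅ e = g.
Proof. rewrite <- (gmulV G g), gmulA, gmul_inv_r; apply gmul1. Qed.

Lemma eval_app (u v : list G) : eval G (u ++ v) = eval G u ⋅ eval G v.
Proof.
  induction u as [|s u IH]; simpl; [rewrite gmul1 | rewrite IH, gmulA]; reflexivity.
Qed.

Fixpoint inv_word (w : list G) : list G :=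
  match w with [] => [] | s :: w' => inv_word w' ++ [ginv G s] end.

Lemma length_inv_word (w : list G) : length (inv_word w) = length w.
Proof. induction w as [|s w IH]; simpl; [|rewrite length_app, IH; simpl]; lia. Qed.

Lemma eval_inv_word_r (w : list G) : eval G w ⋅ eval G (inv_word w) = e.
Proof.
  induction w as [|s w IH]; simpl; [apply gmul1|].
  rewrite eval_app; simpl. rewrite gmul_1_r, <- gmulA, (gmulA G (eval G w)), IH, gmul1.
  apply gmul_inv_r.
Qed.

Lemma gmul_eval_inv_word (a b : G) (w : list G) :
  a ⋅ eval G w = b -> b ⋅ eval G (inv_word w) = a.
Proof. intros <-. rewrite <- gmulA, eval_inv_word_r; apply gmul_1_r. Qed.

Fixpoint walk (g : G) (w : list G) : list G :=
  match w with [] => [g] | s :: w' => g :: walk (g ⋅ s) w' end.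

Lemma walk_head (g : G) (w : list G) : In g (walk g w).
Proof. destruct w; simpl; auto. Qed.

Lemma in_walk (v g : G) (w : list G) :
  In v (walk g w) <-> exists u t, w = u ++ t /\ v = g ⋅ eval G u.
Proof.
  revert g; induction w as [|s w IH]; intro g; simpl; split.
  - intros [<- | []]. exists [], []. split; [reflexivity | symmetry; apply gmul_1_r].
  - intros [u [t [E ->]]]. symmetry in E. apply app_eq_nil in E as [-> ->].
    left; symmetry; apply gmul_1_r.
  - intros [<- | Hv].
    + exists [], (s :: w). split; [reflexivity | symmetry; apply gmul_1_r].
    + apply IH in Hv as [u [t [-> ->]]]. exists (s :: u), t.
      split; [reflexivity | symmetry; apply gmulA].
  - intros [[|s' u] [t [E ->]]].
    + left; symmetry; apply gmul_1_r.
    + injection E as <- ->. right. apply IH. exists u, t. split; [reflexivity | apply gmulA].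
Qed.

Fixpoint walk_parity (f : G -> G -> bool) (g : G) (w : list G) : bool :=
  match w with
  | [] => false
  | s :: w' => xorb (f g (g ⋅ s)) (walk_parity f (g ⋅ s) w')
  end.

Lemma walk_parity_app (f : G -> G -> bool) (g : G) (u v : list G) :
  walk_parity f g (u ++ v) = xorb (walk_parity f g u) (walk_parity f (g ⋅ eval G u) v).
Proof.
  revert g; induction u as [|s u IH]; intro g; simpl.
  - rewrite gmul_1_r; reflexivity.
  - rewrite IH, gmulA, xorb_assoc; reflexivity.
Qed.

Lemma walk_parity_inv_word (f : G -> G -> bool) (g : G) (w : list G) :
  (forall a b, f a b = f b a) ->
  walk_parity f (g ⋅ eval G w) (inv_word w) = walk_parity f g w.
Proof.
  intro Hf; revert g; induction w as [|s w IH]; intro g; simpl; [reflexivity|].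
  rewrite walk_parity_app, gmulA, IH, <- (gmulA G (g ⋅ s)), eval_inv_word_r, gmul_1_r.
  simpl. rewrite <- gmulA, gmul_inv_r, gmul_1_r, (Hf (g ⋅ s) g), xorb_false_r.
  apply xorb_comm.
Qed.

Definition finite_set (A : G -> Prop) : Prop := exists l : list G, forall g, A g -> In g l.

Lemma finite_set_bigcup (L : list G) (Q : G -> G -> Prop) :
  (forall v, In v L -> finite_set (Q v)) -> finite_set (fun w => exists v, In v L /\ Q v w).
Proof.
  induction L as [|a L IH]; intro HQ.
  - exists []. intros w [v [[] _]].
  - destruct (HQ a (or_introl eq_refl)) as [la Hla].
    destruct IH as [l Hl]; [intros v Hv; apply HQ; right; exact Hv|].
    exists (la ++ l). intros w [v [[<- | Hv] Hq]]; apply in_or_app.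
    + left; exact (Hla w Hq).
    + right; apply Hl; eauto.
Qed.

Section Cayley.
Variable gens : list G.
Hypothesis Hsym : symmetric_set G gens.

Lemma word_in_inv_word (w : list G) : word_in G gens w -> word_in G gens (inv_word w).
Proof.
  induction 1 as [|s w Hs _ IH]; simpl; [constructor|].
  apply Forall_app; split; [exact IH | constructor; [apply Hsym, Hs | constructor]].
Qed.

Lemma adj_sym (a b : G) : adj G gens a b -> adj G gens b a.
Proof.
  intros [s [Hs <-]]. exists (ginv G s); split; [apply Hsym, Hs|].
  rewrite <- gmulA, gmul_inv_r; apply gmul_1_r.
Qed.

Lemma connected_in_refl (P : G -> Prop) (a : G) : P a -> connected_in G gens P a a.
Proof. intro Ha; repeat split; auto using rt_refl. Qed.

Lemma connected_in_sym (P : G -> Prop) (a b : G) :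
  connected_in G gens P a b -> connected_in G gens P b a.
Proof.
  intros [Ha [Hb H]]; repeat split; auto; clear Ha Hb.
  induction H as [a b [? [? ?]] | a | a b c _ IH1 _ IH2].
  - apply rt_step; tauto.
  - apply rt_refl.
  - apply rt_trans with b; assumption.
Qed.

Lemma connected_in_trans (P : G -> Prop) (a b c : G) :
  connected_in G gens P a b -> connected_in G gens P b c -> connected_in G gens P a c.
Proof. intros [Ha [_ H]] [_ [Hc H']]; repeat split; eauto using rt_trans. Qed.

Lemma connected_in_step (P : G -> Prop) (a b c : G) :
  connected_in G gens P a b -> P c -> adj G gens b c -> connected_in G gens P a c.
Proof.
  intros [Ha [Hb H]] Hc Hbc; repeat split; auto.
  apply rt_trans with b; [exact H | apply rt_step; auto].
Qed.

Lemma connected_in_mono (P Q : G -> Prop) (a b : G) :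
  (forall v, P v -> Q v) -> connected_in G gens P a b -> connected_in G gens Q a b.
Proof.
  intros HPQ [Ha [Hb H]]; repeat split; auto; clear Ha Hb.
  induction H as [a b [? [? ?]] | a | a b c _ IH1 _ IH2].
  - apply rt_step; auto.
  - apply rt_refl.
  - apply rt_trans with b; assumption.
Qed.

Lemma connected_in_component (P : G -> Prop) (a b : G) :
  connected_in G gens P a b -> connected_in G gens (fun v => connected_in G gens P v b) a b.
Proof.
  intros [Ha [Hb H]]. apply clos_rt_rt1n in H.
  induction H as [a | a a1 b Hstep Hrest IH].
  - apply connected_in_refl, connected_in_refl, Ha.
  - destruct Hstep as [_ [Ha1 Hadj]].
    assert (Ha1b : connected_in G gens P a1 b) by (repeat split; auto using clos_rt1n_rt).
    assert (Hab : connected_in G gens P a b)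
      by (apply connected_in_trans with a1; [repeat split; auto using rt_step | exact Ha1b]).
    destruct (IH Ha1 Hb) as [_ [Hbb Hrt]].
    split; [exact Hab | split; [exact Hbb|]].
    apply rt_trans with a1; [apply rt_step; split; [exact Hab | split; assumption] | exact Hrt].
Qed.

Lemma walk_connected (P : G -> Prop) (g : G) (w : list G) :
  word_in G gens w -> (forall v, In v (walk g w) -> P v) ->
  forall v, In v (walk g w) -> connected_in G gens P g v.
Proof.
  intro Hw; revert g; induction Hw as [|s w Hs _ IH]; intros g HP v Hv; simpl in Hv.
  - destruct Hv as [<- | []]. apply connected_in_refl, HP; left; reflexivity.
  - assert (Hg : P g) by (apply HP; left; reflexivity).
    destruct Hv as [<- | Hv]; [apply connected_in_refl, Hg|].
    apply connected_in_trans with (g ⋅ s).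
    + apply connected_in_step with g; [apply connected_in_refl, Hg | | exists s; auto].
      apply HP; right; apply walk_head.
    + apply IH; [intros u Hu; apply HP; right; exact Hu | exact Hv].
Qed.

Lemma connected_in_walk (P : G -> Prop) (a b : G) :
  connected_in G gens P a b ->
  exists w, word_in G gens w /\ a ⋅ eval G w = b /\ forall v, In v (walk a w) -> P v.
Proof.
  intros [Ha [_ H]]. apply clos_rt_rt1n in H.
  induction H as [a | a a1 b [_ [Ha1 Hadj]] _ IH].
  - exists []. repeat split; [constructor | apply gmul_1_r |].
    intros v [<- | []]; exact Ha.
  - destruct (IH Ha1) as [w [Hw [Ew HP]]].
    assert (Hs : adj G gens a a1) by (destruct Hadj; [|apply adj_sym]; assumption).
    destruct Hs as [s [Hs Es]].
    exists (s :: w). repeat split; [constructor; assumption | |].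
    + simpl. rewrite gmulA, Es. exact Ew.
    + intros v [<- | Hv]; [exact Ha|]. rewrite Es in Hv. exact (HP v Hv).
Qed.

Lemma in_ball_mono (t t' : R) (g : G) : t <= t' -> in_ball G gens t g -> in_ball G gens t' g.
Proof. intros H [w [Hw [Ew Hl]]]; exists w; repeat split; auto; lra. Qed.

Lemma in_ball_floor (t : R) (n : nat) (g : G) :
  t < INR n + 1 -> in_ball G gens t g -> in_ball G gens (INR n) g.
Proof.
  intros Ht [w [Hw [Ew Hl]]]; exists w; split; [exact Hw | split; [exact Ew|]].
  apply le_INR. cut (length w < S n)%nat; [lia|].
  apply INR_lt. rewrite S_INR; lra.
Qed.

Lemma ball_compl_mono (n m : nat) (g : G) :
  (n <= m)%nat -> ball_compl G gens m g -> ball_compl G gens n g.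
Proof. intros Hnm Hm Hn. apply Hm. revert Hn. apply in_ball_mono, le_INR, Hnm. Qed.

Lemma in_ball_mul (t : R) (g : G) (w : list G) :
  word_in G gens w -> in_ball G gens t g -> in_ball G gens (t + INR (length w)) (g ⋅ eval G w).
Proof.
  intros Hw [u [Hu [<- Hl]]]. exists (u ++ w). repeat split.
  - apply Forall_app; auto.
  - apply eval_app.
  - rewrite length_app, plus_INR; lra.
Qed.

Lemma in_ball_adj (t : R) (a b : G) :
  in_ball G gens t a -> adj G gens a b -> in_ball G gens (t + 1) b.
Proof.
  intros Ha [s [Hs <-]].
  replace (a ⋅ s) with (a ⋅ eval G [s]) by (simpl; rewrite gmul_1_r; reflexivity).
  apply (in_ball_mul t a [s]); [repeat constructor; exact Hs | exact Ha].
Qed.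

Lemma finite_set_ball (k : nat) : finite_set (in_ball G gens (INR k)).
Proof.
  induction k as [|k [l Hl]].
  - exists [e]. intros g [[|s w] [_ [<- Hlen]]]; [left; reflexivity|].
    exfalso. apply INR_le in Hlen. simpl in Hlen. lia.
  - exists (l ++ flat_map (fun s => map (gmul G s) l) gens).
    intros g [[|s w] [Hw [<- Hlen]]]; apply in_or_app.
    + left. apply Hl. exists []. repeat split; [constructor | apply pos_INR].
    + right. inversion_clear Hw as [| ? ? Hs Hw']. apply in_flat_map. exists s.
      split; [exact Hs|]. apply (in_map (gmul G s)), Hl.
      exists w. repeat split; [exact Hw'|]. apply INR_le in Hlen. apply le_INR. simpl in Hlen. lia.
Qed.

Lemma closed_word_segment_short (u l t : list G) (g : G) :
  word_in G gens (u ++ l ++ t) -> eval G (u ++ l ++ t) = e ->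
  exists m, word_in G gens m /\ (2 * length m <= length (u ++ l ++ t))%nat /\
    (g ⋅ eval G u ⋅ eval G m = g ⋅ eval G (u ++ l) \/
     g ⋅ eval G (u ++ l) ⋅ eval G m = g ⋅ eval G u).
Proof.
  intros Hw He. apply Forall_app in Hw as [Hu Hw]. apply Forall_app in Hw as [Hl Ht].
  rewrite !length_app. rewrite !eval_app in *.
  destruct (le_lt_dec (2 * length l) (length u + (length l + length t))) as [Hle | Hlt].
  - exists l. repeat split; auto. left. symmetry; apply gmulA.
  - exists (t ++ u). repeat split; [apply Forall_app; auto | rewrite length_app; lia |].
    right. rewrite eval_app, gmulA, <- (gmulA G g), <- (gmulA G (eval G u)), He, gmul_1_r.
    reflexivity.
Qed.

(* Two vertices of a closed walk are joined by the shorter of its two arcs. *)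
Lemma closed_walk_near (g v0 v : G) (w : list G) :
  word_in G gens w -> eval G w = e -> In v0 (walk g w) -> In v (walk g w) ->
  exists m, word_in G gens m /\ (2 * length m <= length w)%nat /\
    (v0 ⋅ eval G m = v \/ v ⋅ eval G m = v0).
Proof.
  intros Hw He Hv0 Hv.
  apply in_walk in Hv0 as [u0 [t0 [-> ->]]]. apply in_walk in Hv as [u [t [E ->]]].
  destruct (app_eq_app _ _ _ _ E) as [l [[-> ->] | [-> ->]]].
  - rewrite <- app_assoc in Hw, He |- *.
    destruct (closed_word_segment_short u l t0 g Hw He) as [m Hm]. exists m; tauto.
  - destruct (closed_word_segment_short u0 l t g Hw He) as [m Hm]. exists m; tauto.
Qed.

Lemma in_ball_closed_walk (t : R) (g v0 v : G) (w : list G) :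
  word_in G gens w -> eval G w = e -> In v0 (walk g w) -> In v (walk g w) ->
  in_ball G gens t v0 -> in_ball G gens (t + INR (length w) / 2) v.
Proof.
  intros Hw He Hv0 Hv Hb.
  destruct (closed_walk_near g v0 v w Hw He Hv0 Hv) as [m [Hm [Hlen Ev]]].
  assert (Hhalf : INR (length m) <= INR (length w) / 2).
  { apply le_INR in Hlen. rewrite mult_INR in Hlen. simpl in Hlen. lra. }
  destruct Ev as [<- | Ev].
  - eapply in_ball_mono; [| apply in_ball_mul; eassumption]. lra.
  - apply gmul_eval_inv_word in Ev. rewrite <- Ev.
    eapply in_ball_mono; [| apply in_ball_mul; [apply word_in_inv_word, Hm | exact Hb]].
    rewrite length_inv_word. lra.
Qed.

(* Follow the word backwards until it first enters [B_n]. *)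
Lemma retract_to_sphere (n : nat) (w : list G) :
  word_in G gens w -> ball_compl G gens n (eval G w) ->
  exists t, in_ball G gens (INR n + 1) t /\
    connected_in G gens (fun g => ball_compl G gens n g /\ in_ball G gens (INR (length w)) g)
      t (eval G w).
Proof.
  induction w as [|s w IH] using rev_ind; intros Hw Hout.
  - exfalso. apply Hout. exists []. repeat split; [constructor | apply pos_INR].
  - apply Forall_app in Hw as [Hw Hs]. inversion_clear Hs as [| ? ? Hs' _].
    assert (Ews : eval G (w ++ [s]) = eval G w ⋅ s)
      by (rewrite eval_app; simpl; rewrite gmul_1_r; reflexivity).
    assert (Hws : in_ball G gens (INR (length (w ++ [s]))) (eval G (w ++ [s]))).
    { exists (w ++ [s]). repeat split; [apply Forall_app; auto | apply Rle_refl]. }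
    assert (Hadj : adj G gens (eval G w) (eval G w ⋅ s)) by (exists s; auto).
    rewrite Ews in *.
    destruct (classic (in_ball G gens (INR n) (eval G w))) as [Hin | Hwout].
    + exists (eval G w ⋅ s). split; [apply (in_ball_adj _ (eval G w)); assumption|].
      apply connected_in_refl; auto.
    + destruct (IH Hw Hwout) as [t [Ht Hc]]. exists t. split; [exact Ht|].
      assert (Hlen : INR (length w) <= INR (length (w ++ [s])))
        by (apply le_INR; rewrite length_app; lia).
      apply connected_in_step with (eval G w); [| split; assumption | exact Hadj].
      eapply connected_in_mono; [| exact Hc]. intros v [Hv1 Hv2].
      split; [exact Hv1 | eapply in_ball_mono; eassumption].
Qed.

Lemma last_entry (P Q : G -> Prop) (a w : G) :
  connected_in G gens P a w -> Q w ->
  exists v, connected_in G gens P a v /\ connected_in G gens Q v w /\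
    (v = a \/ exists u, ~ Q u /\ adj G gens u v).
Proof.
  intros [Ha [_ H]] Hw. apply clos_rt_rt1n in H.
  induction H as [a | a a1 w [_ [Ha1 Hadj]] _ IH].
  - exists a. split; [|split]; [apply connected_in_refl; assumption .. | left; reflexivity].
  - destruct (IH Ha1 Hw) as [v [Ha1v [Hvw Hv]]].
    assert (Hs : adj G gens a a1) by (destruct Hadj; [|apply adj_sym]; assumption).
    assert (Hav : connected_in G gens P a v)
      by (apply connected_in_trans with a1; [apply connected_in_step with a; auto;
          apply connected_in_refl, Ha | exact Ha1v]).
    destruct Hv as [-> | Hv]; [| exists v; auto].
    destruct (classic (Q a)) as [Qa | Qa].
    + exists a. split; [apply connected_in_refl, Ha | split; [| left; reflexivity]].
      apply connected_in_trans with a1; [| exact Hvw].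
      apply connected_in_step with a; [apply connected_in_refl, Qa | apply Hvw | exact Hs].
    + exists a1. split; [exact Hav | split; [exact Hvw | right; exists a; auto]].
Qed.

Lemma finite_component (n m : nat) (a : G) :
  (forall v, connected_in G gens (ball_compl G gens n) a v -> ball_compl G gens m v ->
     finite_set (connected_in G gens (ball_compl G gens m) v)) ->
  finite_set (connected_in G gens (ball_compl G gens n) a).
Proof.
  intro Hfin.
  destruct (finite_set_ball (S m)) as [lb Hlb].
  destruct (finite_set_ball m) as [lm Hlm].
  destruct (finite_set_bigcup (a :: lb) (fun v w => connected_in G gens (ball_compl G gens n) a v /\
              connected_in G gens (ball_compl G gens m) v w)) as [l Hl].
  { intros v _.
    destruct (classic (connected_in G gens (ball_compl G gens n) a v /\ ball_compl G gens m v))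
      as [[Hav Hv] | Hno].
    - destruct (Hfin v Hav Hv) as [l Hl]. exists l. intros w [_ Hvw]. exact (Hl w Hvw).
    - exists []. intros w [Hav [Hv _]]. exfalso; apply Hno; split; assumption. }
  exists (lm ++ l). intros w Haw. apply in_or_app.
  destruct (classic (in_ball G gens (INR m) w)) as [Hw | Hw]; [left; exact (Hlm w Hw) | right].
  destruct (last_entry (ball_compl G gens n) (ball_compl G gens m) a w Haw Hw)
    as [v [Hav [Hvw [-> | [u [Hu Huv]]]]]].
  - apply Hl. exists a. split; [left; reflexivity | split; assumption].
  - apply Hl. exists v. split; [right | split; assumption].
    apply Hlb. rewrite S_INR. apply (in_ball_adj _ u); [apply NNPP, Hu | exact Huv].
Qed.

(* For [m >= n] large, the unique infinite component of [B_m^c] meets every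
   infinite component of [B_n^c]: otherwise the latter would be covered by the
   finite ball [B_(m+1)] and finitely many finite components of [B_m^c]. *)
Lemma connected_in_inf_comp (n : nat) (x y : G) :
  one_ended G gens -> in_inf_comp G gens n x -> in_inf_comp G gens n y ->
  connected_in G gens (ball_compl G gens n) x y.
Proof.
  intros [N HN] Hx Hy.
  destruct (HN (Nat.max N n) (Nat.le_max_l N n)) as [[z Hz] Huniq].
  assert (Hto_z : forall a, in_inf_comp G gens n a ->
            connected_in G gens (ball_compl G gens n) a z).
  { intros a [Ha Hinf]. apply NNPP; intro Haz. apply Hinf, (finite_component n (Nat.max N n)).
    intros v Hav Hv. apply NNPP; intro Hvinf.
    apply Haz, connected_in_trans with v; [exact Hav|].
    apply (connected_in_mono (ball_compl G gens (Nat.max N n))).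
    - intro g; apply ball_compl_mono, Nat.le_max_r.
    - apply Huniq; [split; assumption | exact Hz]. }
  apply connected_in_trans with z; [apply Hto_z, Hx | apply connected_in_sym, Hto_z, Hy].
Qed.

Lemma in_inf_comp_connected (n : nat) (x v : G) :
  in_inf_comp G gens n x -> connected_in G gens (ball_compl G gens n) x v -> in_inf_comp G gens n v.
Proof.
  intros [_ Hinf] Hxv. split; [exact (proj1 (proj2 Hxv)) |].
  intros [l Hl]. apply Hinf. exists l. intros g Hg. apply Hl.
  apply connected_in_trans with x; [apply connected_in_sym|]; assumption.
Qed.

Lemma walk_parity_pres_step (Rel : list (list G)) (f : G -> G -> bool) (w1 w2 : list G) (g : G) :
  (forall a b, f a b = f b a) -> (forall rel, In rel Rel -> eval G rel = e) ->
  (forall rel h, In rel Rel -> walk_parity f h rel = false) ->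
  pres_step G gens Rel w1 w2 -> walk_parity f g w1 = walk_parity f g w2.
Proof.
  intros Hf Hev Hvan [u v s _ | u v rel Hrel]; rewrite !walk_parity_app; f_equal.
  - set (h := g ⋅ eval G u).
    replace (eval G [s; ginv G s]) with e by (simpl; rewrite gmul_1_r, gmul_inv_r; reflexivity).
    simpl. rewrite gmul_1_r, <- gmulA, gmul_inv_r, gmul_1_r, (Hf (h ⋅ s) h), xorb_false_r.
    rewrite xorb_nilpotent. apply xorb_false_l.
  - rewrite (Hev rel Hrel), gmul_1_r, (Hvan rel _ Hrel). apply xorb_false_l.
Qed.

Lemma walk_parity_path_independent (Rel : list (list G)) (f : G -> G -> bool) (g : G)
    (w1 w2 : list G) :
  presentation G gens Rel -> (forall a b, f a b = f b a) ->
  (forall rel h, In rel Rel -> walk_parity f h rel = false) ->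
  word_in G gens w1 -> word_in G gens w2 -> eval G w1 = eval G w2 ->
  walk_parity f g w1 = walk_parity f g w2.
Proof.
  intros [_ [_ [Hrel Hcons]]] Hf Hvan Hw1 Hw2 E.
  assert (Hinv : forall a b, clos_refl_sym_trans _ (pres_step G gens Rel) a b ->
            walk_parity f g a = walk_parity f g b).
  { induction 1 as [a b Hab | a | a b _ IH | a b c _ IH1 _ IH2].
    - apply (walk_parity_pres_step Rel); auto. intros rel Hr; apply Hrel, Hr.
    - reflexivity.
    - symmetry; exact IH.
    - rewrite IH1; exact IH2. }
  apply xorb_eq. rewrite <- (walk_parity_inv_word f g w2 Hf), <- E, <- walk_parity_app.
  apply (Hinv _ []), Hcons.
  - apply Forall_app; split; [exact Hw1 | apply word_in_inv_word, Hw2].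
  - rewrite eval_app, E. apply eval_inv_word_r.
Qed.

Section Spheres.
Variables (Rel : list (list G)) (n : nat) (r : R) (x : G).
Hypothesis Hpres : presentation G gens Rel.
Hypothesis Hrel_short : forall w, In w Rel -> INR (length w) / 2 < r.
Hypothesis Hr : 1 <= r.

Definition in_comp (v : G) : Prop := connected_in G gens (ball_compl G gens n) x v.
Definition shell (v : G) : Prop := in_ball G gens (INR n + r) v /\ in_comp v.
Definition far (v : G) : Prop := in_comp v /\ ~ in_ball G gens (INR n + r) v.

Lemma shell_retract (z : G) :
  shell z -> exists t, in_ball G gens (INR n + 1) t /\ connected_in G gens shell t z.
Proof.
  intros [[w [Hw [<- Hlen]]] Hz].
  destruct (retract_to_sphere n w Hw) as [t [Ht Htz]]; [exact (proj1 (proj2 Hz))|].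
  exists t. split; [exact Ht|].
  eapply connected_in_mono; [| apply connected_in_component, Htz].
  intros v Hv. split.
  - destruct Hv as [[_ Hv] _]. eapply in_ball_mono; eassumption.
  - apply connected_in_trans with (eval G w); [exact Hz|]. apply connected_in_sym.
    eapply connected_in_mono; [| exact Hv]. intros g [Hg _]; exact Hg.
Qed.

Section Cut.
Variable t : G.

Definition in_shell_comp (v : G) : Prop := connected_in G gens shell t v.

Definition cut (a b : G) : bool :=
  asbool ((in_shell_comp a /\ far b) \/ (far a /\ in_shell_comp b)).

Lemma cut_sym (a b : G) : cut a b = cut b a.
Proof. apply asbool_iff; tauto. Qed.

Lemma cut_not_far (a b : G) : ~ far a -> ~ far b -> cut a b = false.
Proof. intros; apply asboolF; tauto. Qed.

Lemma cut_in_comp (a b : G) :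
  in_comp a -> in_comp b -> adj G gens a b ->
  cut a b = xorb (asbool (in_shell_comp a)) (asbool (in_shell_comp b)).
Proof.
  intros Ua Ub Hab. unfold cut.
  destruct (classic (in_shell_comp a)) as [Ca | Ca], (classic (in_shell_comp b)) as [Cb | Cb];
    rewrite ?(asboolT _ Ca), ?(asboolF _ Ca), ?(asboolT _ Cb), ?(asboolF _ Cb); simpl.
  - apply asboolF. intros [[_ [_ Hb]] | [[_ Ha] _]].
    + apply Hb, (proj1 (proj2 Cb)).
    + apply Ha, (proj1 (proj2 Ca)).
  - apply asboolT. left. split; [exact Ca | split; [exact Ub|]]. intro Hb.
    apply Cb, connected_in_step with a; [exact Ca | split; assumption | exact Hab].
  - apply asboolT. right. split; [split; [exact Ua|] | exact Cb]. intro Ha.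
    apply Ca, connected_in_step with b; [exact Cb | split; assumption | apply adj_sym, Hab].
  - apply asboolF. tauto.
Qed.

Lemma walk_parity_cut_not_far (g : G) (w : list G) :
  (forall v, In v (walk g w) -> ~ far v) -> walk_parity cut g w = false.
Proof.
  revert g; induction w as [|s w IH]; intros g Hw; simpl; [reflexivity|].
  rewrite cut_not_far, IH; [reflexivity | ..].
  - intros v Hv; apply Hw; right; exact Hv.
  - apply Hw; left; reflexivity.
  - apply Hw; right; apply walk_head.
Qed.

Lemma walk_parity_cut_in_comp (g : G) (w : list G) :
  word_in G gens w -> (forall v, In v (walk g w) -> in_comp v) ->
  walk_parity cut g w =
    xorb (asbool (in_shell_comp g)) (asbool (in_shell_comp (g ⋅ eval G w))).
Proof.
  intro Hw; revert g; induction Hw as [|s w Hs _ IH]; intros g HU; simpl.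
  - rewrite gmul_1_r, xorb_nilpotent; reflexivity.
  - rewrite cut_in_comp, IH, gmulA; [apply xorb_telescope | ..].
    + intros v Hv; apply HU; right; exact Hv.
    + apply HU; left; reflexivity.
    + apply HU; right; apply walk_head.
    + exists s; auto.
Qed.

Lemma walk_parity_cut_relator (rel : list G) (g : G) :
  word_in G gens rel -> eval G rel = e -> INR (length rel) / 2 < r ->
  walk_parity cut g rel = false.
Proof.
  intros Hw He Hlen.
  destruct (classic (exists v0, In v0 (walk g rel) /\ in_ball G gens (INR n) v0))
    as [[v0 [Hv0 Hb]] | Hout].
  - apply walk_parity_cut_not_far. intros v Hv [_ Hfar]. apply Hfar.
    eapply in_ball_mono; [| apply (in_ball_closed_walk (INR n) g v0 v rel); eassumption]. lra.
  - assert (Hc : forall v, In v (walk g rel) -> ball_compl G gens n v)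
      by (intros v Hv Hb; apply Hout; eauto).
    destruct (classic (in_comp g)) as [Ug | Ug].
    + rewrite walk_parity_cut_in_comp, He, gmul_1_r; [apply xorb_nilpotent | exact Hw |].
      intros v Hv. apply connected_in_trans with g; [exact Ug|].
      apply (walk_connected _ g rel); assumption.
    + apply walk_parity_cut_not_far. intros v Hv [Uv _]. apply Ug.
      apply connected_in_trans with v; [exact Uv|].
      apply connected_in_sym, (walk_connected _ g rel); assumption.
Qed.

Lemma walk_parity_cut_short (a : list G) :
  word_in G gens a -> INR (length a) <= INR n + r -> walk_parity cut e a = false.
Proof.
  intros Ha Hlen. apply walk_parity_cut_not_far. intros v Hv [_ Hfar]. apply Hfar.
  apply in_walk in Hv as [u [u' [-> ->]]]. apply Forall_app in Ha as [Hu _].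
  exists u. split; [exact Hu | split; [symmetry; apply gmul1|]].
  rewrite length_app, plus_INR in Hlen. pose proof (pos_INR (length u')). lra.
Qed.

Lemma sphere_points_connected (t' : G) :
  shell t -> shell t' -> in_ball G gens (INR n + 1) t -> in_ball G gens (INR n + 1) t' ->
  in_shell_comp t'.
Proof.
  intros Ht Ht' [a [Ha [Ea La]]] [b [Hb [Eb Lb]]].
  apply NNPP; intro Hnc.
  assert (Htt' : connected_in G gens
                   (fun v => connected_in G gens (ball_compl G gens n) v t') t t').
  { apply connected_in_component.
    apply connected_in_trans with x; [apply connected_in_sym, Ht | apply Ht']. }
  destruct (connected_in_walk _ _ _ Htt') as [p [Hp [Ep HUp]]].
  assert (Hpar : walk_parity cut t p = true).
  { rewrite walk_parity_cut_in_comp, Ep,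
      (asboolT (in_shell_comp t) (connected_in_refl _ _ Ht)), (asboolF _ Hnc);
      [reflexivity | exact Hp |].
    intros v Hv. apply connected_in_trans with t'; [apply Ht' | apply connected_in_sym, HUp, Hv]. }
  assert (Hindep : walk_parity cut e (a ++ p) = walk_parity cut e b).
  { apply (walk_parity_path_independent Rel); [exact Hpres | exact cut_sym | | | exact Hb |].
    - intros rel h Hin. destruct Hpres as [_ [_ [Hrel _]]].
      apply walk_parity_cut_relator; [apply Hrel, Hin .. | apply Hrel_short, Hin].
    - apply Forall_app; auto.
    - rewrite eval_app, Ea, Ep, Eb. reflexivity. }
  rewrite walk_parity_app, gmul1, Ea, Hpar, !walk_parity_cut_short in Hindep;
    [discriminate | assumption | lra | assumption | lra].
Qed.

End Cut.

Lemma shell_connected : connected_set G gens shell.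
Proof.
  intros y z Hy Hz.
  destruct (shell_retract y Hy) as [t [Ht Hty]], (shell_retract z Hz) as [t' [Ht' Ht'z]].
  apply connected_in_trans with t; [apply connected_in_sym, Hty|].
  apply connected_in_trans with t'; [| exact Ht'z].
  apply sphere_points_connected; [apply Hty | apply Ht'z | exact Ht | exact Ht'].
Qed.

End Spheres.

End Cayley.
End Group.

Theorem mainTheorem1 (G : group) (S : list G) (Rel : list (list G)) (r : R) :
  presentation G S Rel ->
  one_ended G S ->
  0 < r ->
  (forall w, In w Rel -> INR (length w) / 2 < r) ->
  connected_spheres G S r.
Proof.
  intros Hpres Hends _ Hrel n y z [Hby Hy] [Hbz Hz].
  destruct (Rlt_or_le r 1) as [Hr1 | Hr1].
  { exfalso. apply (proj1 Hy), (in_ball_floor G S (INR n + r)); [lra | exact Hby]. }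
  assert (Hshell : connected_set G S (shell G S n r y))
    by (apply (shell_connected G S (proj1 Hpres) Rel); assumption).
  eapply connected_in_mono; [| apply Hshell; split; [exact Hby | | exact Hbz |]].
  - intros v [Hv Hyv]. split; [exact Hv | apply (in_inf_comp_connected G S n y v Hy Hyv)].
  - apply connected_in_refl, (proj1 Hy).
  - apply (connected_in_inf_comp G S (proj1 Hpres)); assumption.
Qed.
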